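(* Let $A=\{0,1,2\}$ and let $T\colon A^4\to A$ be given by $T(1,1,2,2)=T(1,2,1,2)=1$ and $T(\mathbf{x})=0$ for all other $\mathbf{x}\in A^4$. For $a\in A$ let $z_a\colon A^2\to A$ be given by $z_a(2,2)=a$ and $z_a(x,y)=0$ otherwise, and for $a,b,c,d,e\in A$ let $f_{a,(b,c,d,e)}\colon A^2\to A$ be given by $f(0,2)=b$, $f(1,2)=c$, $f(2,0)=d$, $f(2,1)=e$, $f(2,2)=a$ and $f(x,y)=0$ for $(x,y)\in\{0,1\}^2$. Then $\{T\}^{*(2)}$ consists of exactly the following 65 functions: \[\{T\}^{*(2)}=\{e^2_1,e^2_2\}\ \dot\cup\ \{z_a : a\in\{0,1,2\}\}\ \dot\cup\ \bigcup_{c\in\{1,2\}}\{f_{a,\mathbf{x}} : a\in\{0,c\},\ \mathbf{x}\in\{0,c\}^4\setminus\{(0,0,0,0)\}\},\] where $e^2_1(x,y)=x$ and $e^2_2(x,y)=y$.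
   Context: An $m$-ary $g$ commutes with an $n$-ary $h$ if $g\bigl((h((x_{ij})_{j}))_{i}\bigr)=h\bigl((g((x_{ij})_{i}))_{j}\bigr)$ for all $(x_{ij})\in A^{m\times n}$. For a set $F$ of finitary operations on $A$, $F^*$ is the set of all finitary operations of positive arity commuting with every member of $F$, and $F^{*(2)}$ is the set of binary members of $F^*$. *)

From mathcomp Require Import all_boot.
Set Implicit Arguments. Unset Strict Implicit. Unset Printing Implicit Defensive.

Definition A := 'I_3.
Definition aA (k : nat) : A := @inord 2 k.

Definition op (n : nat) := {ffun 'I_n -> A} -> A.

Definition commutes (m n : nat) (g : op m) (h : op n) : Prop :=
  forall x : 'I_m -> 'I_n -> A,
    g [ffun i => h [ffun j => x i j]] = h [ffun j => g [ffun i => x i j]].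

Definition binop := {ffun A * A -> A}.
Definition op_of2 (g : binop) : op 2 := fun v => g (v ord0, v ord_max).

Definition T : op 4 := fun v =>
  let x i := val (v (@inord 3 i)) in
  if ((x 0, x 1, x 2, x 3) == (1, 1, 2, 2)) || ((x 0, x 1, x 2, x 3) == (1, 2, 1, 2))
  then aA 1 else aA 0.

Definition in_starT2 (g : binop) : Prop := commutes (op_of2 g) T.

Definition e21 : binop := [ffun p => p.1].
Definition e22 : binop := [ffun p => p.2].

Definition z (a : A) : binop :=
  [ffun p => if (val p.1 == 2) && (val p.2 == 2) then a else aA 0].

Definition f (a : A) (xs : {ffun 'I_4 -> A}) : binop :=
  [ffun p => let x := val p.1 in let y := val p.2 in
     if (x == 2) && (y == 2) then a
     else if (x == 0) && (y == 2) then xs (@inord 3 0)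
     else if (x == 1) && (y == 2) then xs (@inord 3 1)
     else if (x == 2) && (y == 0) then xs (@inord 3 2)
     else if (x == 2) && (y == 1) then xs (@inord 3 3)
     else aA 0].

Definition fam_f : {set binop} :=
  \bigcup_(c in [set aA 1; aA 2])
    [set f a xs | a in [set aA 0; c],
                  xs in [set xs : {ffun 'I_4 -> A} |
                          [forall i, xs i \in [set aA 0; c]] && (xs != [ffun=> aA 0])]].

Definition listed : {set binop} :=
  [set e21; e22] :|: [set z a | a : A] :|: fam_f.

From mathcomp Require Import all_boot.
Set Implicit Arguments. Unset Strict Implicit. Unset Printing Implicit Defensive.

(* The binary operations commuting with T are the two projections and the
   operations g that vanish on {0,1}^2 and take their values in {0,c} for a
   single c; the latter are exactly the z_a and the f_{a,x}.  Projections commute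
   with everything.  For g of the second kind both sides of the identity are 0:
   g(T u, T v) = 0 since T only takes the values 0 and 1, and T of a row of
   values in {0,c} is 0 since both points (1,1,2,2), (1,2,1,2) of the support
   of T contain 1 and 2.  Conversely, the instances of the identity whose two
   rows have the shape (u,u,v,v) or (u,v,u,v) already exclude every other
   operation, which is checked by sieving the 3^9 tables of values.  The counts
   follow from the injectivity of (a, x) |-> f_{a,x}. *)

Definition o0 : A := @Ordinal 3 0 isT.
Definition o1 : A := @Ordinal 3 1 isT.
Definition o2 : A := @Ordinal 3 2 isT.

Lemma A_cases (x : A) : x = o0 \/ x = o1 \/ x = o2.
Proof. by case: x => -[|[|[|//]]] ?; [left | right; left | right; right]; apply: val_inj. Qed.

Lemma aA0 : aA 0 = o0. Proof. exact/val_inj/inordK. Qed.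
Lemma aA1 : aA 1 = o1. Proof. exact/val_inj/inordK. Qed.
Lemma aA2 : aA 2 = o2. Proof. exact/val_inj/inordK. Qed.

Definition vanishes_on_01 (g : binop) : Prop :=
  forall x y : A, val x < 2 -> val y < 2 -> g (x, y) = o0.

Definition valued_in (S : {set A}) (g : binop) : Prop := forall p, g p \in S.

Lemma projection_commutes n (h : op n) g :
  g \in [set e21; e22] -> commutes (op_of2 g) h.
Proof.
by case/set2P=> -> x; rewrite /op_of2 !ffunE /=;
  congr h; apply/ffunP => j; rewrite !ffunE.
Qed.

Lemma T_lt2 v : val (T v) < 2.
Proof. by rewrite /T; case: ifP; rewrite ?aA0 ?aA1. Qed.

Lemma T_two_valued c (v : {ffun 'I_4 -> A}) : (forall j, v j \in [set o0; c]) -> T v = o0.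
Proof.
move=> vc; rewrite /T; case: ifP => [|_]; last exact: aA0.
have val_c j k : val (v j) = k.+1 -> val c = k.+1.
  by move: (vc j); rewrite !inE -!val_eqE /= => /orP[/eqP->|/eqP<-].
by case/orP=> /eqP[/val_c c0 /val_c c1 /val_c c2 /val_c c3]; congruence.
Qed.

Lemma vanishing_in_starT2 c g :
  vanishes_on_01 g -> valued_in [set o0; c] g -> in_starT2 g.
Proof.
move=> g0 gc x; rewrite /op_of2 !ffunE g0 ?T_lt2 //.
by apply/esym/(T_two_valued (c := c)) => j; rewrite ffunE.
Qed.

Definition border (i : 'I_4) : A * A :=
  nth (o2, o2) [:: (o0, o2); (o1, o2); (o2, o0); (o2, o1)] i.

Lemma f_border a xs i : f a xs (border i) = xs i.
Proof. by rewrite -[in RHS](inord_val i) ffunE; case: i => -[|[|[|[|//]]]]. Qed.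

Lemma f_corner a xs : f a xs (o2, o2) = a.
Proof. by rewrite ffunE. Qed.

Lemma f_vanishes a xs : vanishes_on_01 (f a xs).
Proof.
by move=> x y; case: (A_cases x) => [->|[->|->]] //; case: (A_cases y) => [->|[->|->]];
  rewrite // ffunE aA0.
Qed.

Lemma f_valued_in (S : {set A}) a (xs : {ffun 'I_4 -> A}) :
  o0 \in S -> a \in S -> (forall i, xs i \in S) -> valued_in S (f a xs).
Proof. by move=> S0 Sa Sxs [x y]; rewrite ffunE /=; do !case: ifP => _; rewrite ?aA0. Qed.

Lemma z_is_f a : z a = f a [ffun=> aA 0].
Proof. by apply/ffunP => -[x y]; rewrite !ffunE /=; do !case: ifP. Qed.

Lemma f_inj : injective (uncurry f).
Proof.
move=> [a xs] [b ys] /= fE; congr (_, _); first by rewrite -(f_corner a xs) fE f_corner.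
by apply/ffunP => i; rewrite -(f_border a xs) -(f_border b ys) fE.
Qed.

Lemma vanishing_fE g : vanishes_on_01 g -> g = f (g (o2, o2)) [ffun i => g (border i)].
Proof.
move=> g0; apply/ffunP => -[x y]; rewrite !ffunE.
by case: (A_cases x) => [->|[->|->]]; case: (A_cases y) => [->|[->|->]];
  rewrite /= ?ffunE /border ?inordK ?aA0 //; apply: g0.
Qed.

Definition fam_f_at (c : A) : {set binop} :=
  [set f a xs | a in [set aA 0; c],
                xs in [set xs : {ffun 'I_4 -> A} |
                        [forall i, xs i \in [set aA 0; c]] && (xs != [ffun=> aA 0])]].

Lemma fam_fE : fam_f = \bigcup_(c in [set aA 1; aA 2]) fam_f_at c.
Proof. by []. Qed.

Lemma mem_fam_f_at c g : g \in fam_f_at c ->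
  [/\ vanishes_on_01 g, valued_in [set o0; c] g & exists i, g (border i) = c].
Proof.
case/imset2P => a xs ac; rewrite inE => /andP[/forallP xsc xs_nz] ->.
have xs_c i : xs i \in [set o0; c] by rewrite -aA0.
split; [exact: f_vanishes | by apply: f_valued_in; rewrite -?aA0 // !inE eqxx |].
have /existsP[i xs_i] : [exists i, xs i != o0].
  rewrite -negb_forall; apply: contra xs_nz => /forallP xs0.
  by apply/eqP/ffunP => i; rewrite ffunE aA0; apply/eqP.
exists i; rewrite f_border.
by move: (xs_c i) xs_i; rewrite !inE => /orP[]/eqP->; rewrite ?eqxx.
Qed.

Lemma z_fam_fP g : g \in [set z a | a : A] :|: fam_f <->
  vanishes_on_01 g /\ exists c, valued_in [set o0; c] g.
Proof.
split.
  case/setUP => [/imsetP[a _ ->]|/bigcupP[c _ /mem_fam_f_at[g0 gc _]]].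
    2: by split; [|exists c].
  rewrite z_is_f; split; [exact: f_vanishes | exists a].
  by apply: f_valued_in => [||i]; rewrite ?ffunE ?aA0 !inE eqxx ?orbT.
case=> g0 [c gc]; rewrite (vanishing_fE g0); set xs := [ffun i => g (border i)].
have [xs0|xs_nz] := eqVneq xs [ffun=> aA 0].
  by apply/setUP; left; rewrite xs0 -z_is_f imset_f.
have c12 : c \in [set aA 1; aA 2].
  rewrite !inE aA1 aA2; case: (A_cases c) => [c0|[->|->]]; rewrite ?eqxx ?orbT //.
  case/eqP: xs_nz; apply/ffunP => i; rewrite !ffunE aA0.
  by move: (gc (border i)); rewrite c0 !inE orbb => /eqP.
apply/setUP; right; apply/bigcupP; exists c => //; apply: imset2_f; first by rewrite aA0.
by rewrite inE xs_nz andbT; apply/forallP => i; rewrite ffunE aA0.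
Qed.

(* Finite functions do not reduce under vm_compute, so the search below runs
   on value tables: tab g lists the g(x,y) in the order 3x+y, and T4 is T on
   values. *)
Fixpoint words (T : Type) (s : seq T) (n : nat) : seq (seq T) :=
  if n is m.+1 then [seq x :: w | x <- s, w <- words s m] else [:: [::]].

Lemma mem_words (T : eqType) (s w : seq T) : all (mem s) w -> w \in words s (size w).
Proof. by elim: w => [|x w IHw] //= /andP[sx /IHw sw]; apply: allpairs_f. Qed.

Definition entry (t : seq nat) (x y : nat) : nat := nth 0 t (3 * x + y).

Definition tab (g : binop) : seq nat :=
  [seq val (g (x, y)) | x <- [:: o0; o1; o2], y <- [:: o0; o1; o2]].

Lemma entry_tab g x y : entry (tab g) (val x) (val y) = val (g (x, y)).
Proof. by case: (A_cases x) => [->|[->|->]]; case: (A_cases y) => [->|[->|->]]. Qed.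

Lemma tab_inj : injective tab.
Proof. by move=> g h gh; apply/ffunP => -[x y]; apply: val_inj; rewrite -!entry_tab gh. Qed.

Lemma mem_tab (g : binop) p : val (g p) \in tab g.
Proof.
by case: p => x y; case: (A_cases x) => [->|[->|->]]; case: (A_cases y) => [->|[->|->]];
  rewrite !inE eqxx ?orbT.
Qed.

Lemma tab_in_words g : tab g \in words [:: 0; 1; 2] 9.
Proof.
have val_digit (x : A) : val x \in [:: 0; 1; 2] by case: (A_cases x) => [->|[->|->]].
by apply: (mem_words (w := tab g)); rewrite /= !val_digit.
Qed.

Definition T4 (r : nat * nat * nat * nat) : nat :=
  match r with (1, 1, 2, 2) | (1, 2, 1, 2) => 1 | _ => 0 end.

Lemma val_T v :
  val (T v) = T4 (val (v (inord 0)), val (v (inord 1)), val (v (inord 2)), val (v (inord 3))).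
Proof.
have T4E r : T4 r = if (r == (1, 1, 2, 2)) || (r == (1, 2, 1, 2)) then 1 else 0.
  by case: r => [[[[|[|[|a]]] [|[|[|b]]]] [|[|[|c]]]] [|[|[|d]]]].
by rewrite T4E /T; case: ifP; rewrite ?aA0 ?aA1.
Qed.

Definition commutes_at (t : seq nat) (a b : A * A * A * A) : bool :=
  let: (a0, a1, a2, a3) := a in let: (b0, b1, b2, b3) := b in
  entry t (T4 (val a0, val a1, val a2, val a3)) (T4 (val b0, val b1, val b2, val b3))
  == T4 (entry t a0 b0, entry t a1 b1, entry t a2 b2, entry t a3 b3).

Lemma in_starT2_commutes_at g a b : in_starT2 g -> commutes_at (tab g) a b.
Proof.
case: a b => [[[a0 a1] a2] a3] [[[b0 b1] b2] b3] gT.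
pose x (i : 'I_2) : 'I_4 -> A :=
  nth o0 (if i == ord0 then [:: a0; a1; a2; a3] else [:: b0; b1; b2; b3]).
have := congr1 val (gT x).
by rewrite /op_of2 !ffunE -entry_tab !val_T !ffunE -!entry_tab /x /= !inordK // => ->.
Qed.

Definition test_rows : seq (A * A * A * A) :=
  [seq (u, u, v, v) | u <- [:: o0; o1; o2], v <- [:: o0; o1; o2]] ++
  [seq (u, v, u, v) | u <- [:: o0; o1; o2], v <- [:: o0; o1; o2]].

(* Filtering the candidates one test at a time keeps the call-by-value search
   fast: most tables fail one of the first tests. *)
Definition sieve (tests : seq ((A * A * A * A) * (A * A * A * A))) (ts : seq (seq nat)) :=
  foldr (fun ab => filter (fun t => commutes_at t ab.1 ab.2)) ts tests.

Lemma mem_sieve tests ts t :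
  (t \in sieve tests ts) = (t \in ts) && all (fun ab => commutes_at t ab.1 ab.2) tests.
Proof. by elim: tests => [|ab tests IH] /=; rewrite ?andbT // mem_filter IH andbCA. Qed.

Definition listed_table (t : seq nat) : bool :=
  (t \in [:: [:: 0; 0; 0; 1; 1; 1; 2; 2; 2]; [:: 0; 1; 2; 0; 1; 2; 0; 1; 2]])
  || [&& entry t 0 0 == 0, entry t 0 1 == 0, entry t 1 0 == 0, entry t 1 1 == 0
       & has (fun c => all (fun k => (k == 0) || (k == c)) t) [:: 1; 2]].

Lemma sieve_listed :
  all listed_table (sieve [seq (a, b) | a <- test_rows, b <- test_rows] (words [:: 0; 1; 2] 9)).
Proof. by vm_compute. Qed.

Lemma in_starT2_listed_table g : in_starT2 g -> listed_table (tab g).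
Proof.
move=> gT; apply: (allP sieve_listed); rewrite mem_sieve tab_in_words.
by apply/allP => ab _; apply: in_starT2_commutes_at.
Qed.

Lemma listed_table_classify g : listed_table (tab g) ->
  g \in [set e21; e22] \/ vanishes_on_01 g /\ exists c, valued_in [set o0; c] g.
Proof.
case/orP => [proj | /and5P[g00 g01 g10 g11 /hasP[c c12 /allP gc]]].
  by left; move: proj; rewrite !inE -!(inj_eq tab_inj) [tab e21]/tab [tab e22]/tab /= !ffunE.
right; split.
  move=> x y x2 y2; apply: val_inj; rewrite -entry_tab.
  by case: (A_cases x) x2 => [->|[->|->]] // _;
    case: (A_cases y) y2 => [->|[->|->]] // _; apply/eqP.
have c3 : c < 3 by move: c12; rewrite !inE => /orP[]/eqP->.
exists (inord c) => p; have := gc _ (mem_tab g p).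
by rewrite !inE -!val_eqE /= inordK.
Qed.

Lemma cards_disjointU (T : finType) (B C : {set T}) :
  [disjoint B & C] -> #|B :|: C| = #|B| + #|C|.
Proof. by move=> BC; apply/eqP; rewrite (leq_card_setU B C).2. Qed.

Lemma card_projections : #|[set e21; e22]| = 2.
Proof. by rewrite cards2; case: eqP => // /ffunP/(_ (o0, o1)); rewrite !ffunE. Qed.

Lemma card_z : #|[set z a | a : A]| = 3.
Proof. by rewrite card_imset ?card_ord // => a b /ffunP/(_ (o2, o2)); rewrite !ffunE. Qed.

Lemma card_fam_f_at c : c != o0 -> #|fam_f_at c| = 30.
Proof.
move=> c_nz; set S := [set aA 0; c].
have cardS : #|S| = 2 by rewrite cards2 aA0 eq_sym c_nz.
have card_maps : #|[set xs : {ffun 'I_4 -> A} | [forall i, xs i \in S]]| = 16.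
  rewrite (@eq_card _ _ (ffun_on S)) ?card_ffun_on ?cardS ?card_ord // => xs.
  by rewrite inE; apply/forallP/ffun_onP.
rewrite /fam_f_at curry_imset2X card_imset; last exact: f_inj.
rewrite cardsX cardS; move: card_maps; rewrite (cardsD1 [ffun=> aA 0]) inE.
have -> : [forall i : 'I_4, [ffun=> aA 0] i \in S] by apply/forallP => i; rewrite ffunE !inE eqxx.
have -> : [set xs : {ffun 'I_4 -> A} | [forall i, xs i \in S] & xs != [ffun=> aA 0]]
          = [set xs : {ffun 'I_4 -> A} | [forall i, xs i \in S]] :\ [ffun=> aA 0].
  by apply/setP => xs; rewrite !inE andbC.
by rewrite add1n => -[->].
Qed.

Lemma fam_f_at_disjoint : [disjoint fam_f_at o1 & fam_f_at o2].
Proof.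
apply/pred0P => g /=; apply/negbTE/andP => -[/mem_fam_f_at[_ _ [i gi]] /mem_fam_f_at[_ g2 _]].
by move: (g2 (border i)); rewrite gi !inE.
Qed.

Lemma card_fam_f : #|fam_f| = 60.
Proof.
rewrite fam_fE big_setU1 /= ?big_set1; last by rewrite inE aA1 aA2.
by rewrite aA1 aA2 cards_disjointU ?fam_f_at_disjoint ?card_fam_f_at.
Qed.

Lemma projection_notin_z_fam_f g :
  g \in [set e21; e22] -> g \notin [set z a | a : A] :|: fam_f.
Proof.
by case/set2P=> ->; apply/negP => /z_fam_fP[/(_ o1 o1 isT isT)]; rewrite ffunE.
Qed.

Lemma disjoint_projections_z : [disjoint [set e21; e22] & [set z a | a : A]].
Proof.
rewrite disjoint_subset; apply/subsetP => g /projection_notin_z_fam_f.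
by rewrite !inE negb_or => /andP[].
Qed.

Lemma disjoint_fam_f : [disjoint [set e21; e22] :|: [set z a | a : A] & fam_f].
Proof.
rewrite disjoint_subset; apply/subsetP => g.
case/setUP => [/projection_notin_z_fam_f|/imsetP[a _ ->]]; first by rewrite !inE negb_or => /andP[].
rewrite inE; apply/bigcupP => -[c]; rewrite !inE aA1 aA2 => c12 /mem_fam_f_at[_ _ [i]].
by rewrite z_is_f f_border ffunE aA0 => c0; move: c12; rewrite -c0.
Qed.

Theorem lemma3p4 :
  (forall g : binop, in_starT2 g <-> g \in listed)
  /\ #|[set e21; e22]| = 2 /\ #|[set z a | a : A]| = 3 /\ #|fam_f| = 60
  /\ [disjoint [set e21; e22] & [set z a | a : A]]
  /\ [disjoint [set e21; e22] :|: [set z a | a : A] & fam_f]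
  /\ #|listed| = 65.
Proof.
have listedE g : g \in listed = (g \in [set e21; e22]) || (g \in [set z a | a : A] :|: fam_f).
  by rewrite /listed -setUA inE.
split.
  move=> g; rewrite listedE; split.
    by case/in_starT2_listed_table/listed_table_classify => [->|/z_fam_fP ->]; rewrite ?orbT.
  case/orP => [gP|/z_fam_fP[g0 [c gc]]]; first exact: projection_commutes.
  exact: vanishing_in_starT2 gc.
split; first exact: card_projections.
split; first exact: card_z.
split; first exact: card_fam_f.
split; first exact: disjoint_projections_z.
split; first exact: disjoint_fam_f.
by rewrite (cards_disjointU disjoint_fam_f) (cards_disjointU disjoint_projections_z)
  card_projections card_z card_fam_f.
Qed.
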